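(* Every locally residually sofic monoid is sofic. In particular, every residually sofic monoid is sofic.
   Context: A monoid $M$ is residually sofic if for any distinct $s_1,s_2\in M$ there exist a sofic monoid $N$ and a monoid morphism (preserving identities) $\varphi\colon M\to N$ with $\varphi(s_1)\ne\varphi(s_2)$; $M$ is locally residually sofic if every finitely generated submonoid of $M$ is residually sofic. For a non-empty finite set $X$, $\mathrm{Map}(X)$ is the monoid of all maps $X\to X$ under composition (identity $\mathrm{Id}_X$) with the Hamming metric $d_X(f,g)=|\{x\in X : f(x)\ne g(x)\}|/|X|$. For a monoid $M$, finite $K\subset M$ and $\varepsilon,\alpha>0$, a map $\varphi\colon M\to\mathrm{Map}(X)$ is a $(K,\varepsilon)$-morphism if $d_X(\varphi(k_1k_2),\varphi(k_1)\varphi(k_2))\le\varepsilon$ for all $k_1,k_2\in K$ and $d_X(\varphi(1_M),\mathrm{Id}_X)\le\varepsilon$; it is $(K,\alpha)$-injective if $d_X(\varphi(k_1),\varphi(k_2))\ge\alpha$ for all distinct $k_1,k_2\in K$. $M$ is sofic if for every finite $K\subset M$ and every $\varepsilon>0$ there exist a non-empty finite set $X$ and a $(K,1-\varepsilon)$-injective $(K,\varepsilon)$-morphism $\varphi\colon M\to\mathrm{Map}(X)$. *)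

From Stdlib Require Import Reals List ProofIrrelevance.
From mathcomp Require Import all_boot.

Set Implicit Arguments.
Unset Strict Implicit.
Unset Printing Implicit Defensive.

Record monoid := Monoid {
  mcarrier :> Type;
  mmul : mcarrier -> mcarrier -> mcarrier;
  mone : mcarrier;
  mmulA : forall x y z, mmul x (mmul y z) = mmul (mmul x y) z;
  mmul1x : forall x, mmul mone x = x;
  mmulx1 : forall x, mmul x mone = x
}.

Definition is_monoid_morphism (M N : monoid) (f : M -> N) : Prop :=
  (forall x y, f (mmul x y) = mmul (f x) (f y)) /\ f (mone M) = mone N.

Definition hdist (X : finType) (f g : X -> X) : R :=
  Rdiv (INR #|[pred x | f x != g x]|) (INR #|X|).

(* Product in Map(X) is composition: (f g)(x) = f (g x); finite subsets K of M
   are given as lists. *)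
Definition sofic (M : monoid) : Prop :=
  forall (K : list M) (eps : R), Rlt 0 eps ->
  exists (X : finType) (phi : M -> X -> X),
    (0 < #|X|)%N /\
    (forall k1 k2, In k1 K -> In k2 K ->
       Rle (hdist (phi (mmul k1 k2)) (phi k1 \o phi k2)) eps) /\
    Rle (hdist (phi (mone M)) (fun x => x)) eps /\
    (forall k1 k2, In k1 K -> In k2 K -> k1 <> k2 ->
       Rle (Rminus 1 eps) (hdist (phi k1) (phi k2))).

Definition residually_sofic (M : monoid) : Prop :=
  forall s1 s2 : M, s1 <> s2 ->
  exists (N : monoid) (phi : M -> N),
    sofic N /\ is_monoid_morphism phi /\ phi s1 <> phi s2.

Inductive gen (M : monoid) (S : list M) : M -> Prop :=
| gen_one : gen S (mone M)
| gen_elt s : In s S -> gen S s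
| gen_mul x y : gen S x -> gen S y -> gen S (mmul x y).

Section Submonoid.
Variables (M : monoid) (S : list M).

Definition sub_carrier := {x : M | gen S x}.

Definition sub_mul (a b : sub_carrier) : sub_carrier :=
  exist _ (mmul (proj1_sig a) (proj1_sig b))
        (gen_mul (proj2_sig a) (proj2_sig b)).

Definition sub_one : sub_carrier := exist _ (mone M) (gen_one S).

Lemma sub_eq (a b : sub_carrier) : proj1_sig a = proj1_sig b -> a = b.
Proof.
case: a b => [x px] [y py] /= exy; subst y.
by rewrite (proof_irrelevance _ px py).
Qed.

Lemma sub_mulA x y z : sub_mul x (sub_mul y z) = sub_mul (sub_mul x y) z.
Proof. by apply: sub_eq; rewrite /= mmulA. Qed.

Lemma sub_mul1x x : sub_mul sub_one x = x.
Proof. by apply: sub_eq; rewrite /= mmul1x. Qed.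

Lemma sub_mulx1 x : sub_mul x sub_one = x.
Proof. by apply: sub_eq; rewrite /= mmulx1. Qed.

Definition gen_submonoid : monoid :=
  Monoid sub_mulA sub_mul1x sub_mulx1.

End Submonoid.

Definition locally_residually_sofic (M : monoid) : Prop :=
  forall S : list M, residually_sofic (gen_submonoid S).

From Stdlib Require Import Reals List Lra ClassicalEpsilon Classical.
From mathcomp Require Import all_boot.
Set Implicit Arguments.
Unset Strict Implicit.
Unset Printing Implicit Defensive.
Local Open Scope R_scope.

(* Each pair of distinct elements of K is separated by a morphism into a
   sofic monoid; approximate these monoids and let M act diagonally on the
   product of the finite sets.  Agreement ratios multiply on products, so
   the morphism defects add up while every separation survives; dividing
   eps by the number of pairs keeps the total defect below eps.  For the
   local version, approximations of the submonoid generated by K pull back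
   to M along a map that is multiplicative and injective on K. *)

Definition hagree (X : finType) (f g : X -> X) : R :=
  INR #|[pred x | f x == g x]| / INR #|X|.

Lemma hdistE (X : finType) (f g : X -> X) : (0 < #|X|)%N ->
  hdist f g = 1 - hagree f g.
Proof.
move=> X_gt0; rewrite /hdist /hagree.
have nX_gt0 : 0 < INR #|X| by apply/lt_0_INR/ltP.
have card_split : INR #|X| = INR #|[pred x | f x == g x]| + INR #|[pred x | f x != g x]|.
  by rewrite -plus_INR -(cardC [pred x | f x == g x]); congr INR; apply: eq_card.
have -> : 1 = INR #|X| / INR #|X| by field; lra.
by rewrite -Rdiv_minus_distr; congr Rdiv; rewrite card_split; ring.
Qed.

Lemma hagree_bounds (X : finType) (f g : X -> X) : (0 < #|X|)%N ->
  0 <= hagree f g <= 1.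
Proof.
move=> X_gt0; rewrite /hagree.
have nX_gt0 : 0 < INR #|X| by apply/lt_0_INR/ltP.
have agree_le : INR #|[pred x | f x == g x]| <= INR #|X| by apply/le_INR/leP/max_card.
split; first by apply: Rmult_le_pos; [apply: pos_INR | apply/Rlt_le/Rinv_0_lt_compat].
apply: (Rmult_le_reg_r (INR #|X|)) => //.
by rewrite /Rdiv Rmult_assoc Rinv_l; lra.
Qed.

Definition prod_fun (X1 X2 : Type) (f1 : X1 -> X1) (f2 : X2 -> X2) (p : X1 * X2) :
  X1 * X2 := (f1 p.1, f2 p.2).

Lemma hagree_prod_fun (X1 X2 : finType) (f1 g1 : X1 -> X1) (f2 g2 : X2 -> X2) :
  hagree (prod_fun f1 f2) (prod_fun g1 g2) = hagree f1 g1 * hagree f2 g2.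
Proof.
rewrite /hagree card_prod.
have -> : #|[pred p | prod_fun f1 f2 p == prod_fun g1 g2 p]| =
          (#|[pred x | f1 x == g1 x]| * #|[pred y | f2 y == g2 y]|)%N.
  by rewrite -cardX; apply: eq_card => -[x y]; rewrite !inE xpair_eqE.
by rewrite !mult_INR /Rdiv Rinv_mult; ring.
Qed.

Section ProdFunDist.
Variables (X1 X2 : finType) (f1 g1 : X1 -> X1) (f2 g2 : X2 -> X2).
Hypotheses (X1_gt0 : (0 < #|X1|)%N) (X2_gt0 : (0 < #|X2|)%N).

Let XX_gt0 : (0 < #|{: X1 * X2}|)%N. Proof. by rewrite card_prod muln_gt0 X1_gt0. Qed.

Lemma hdist_prod_fun_le :
  hdist (prod_fun f1 f2) (prod_fun g1 g2) <= hdist f1 g1 + hdist f2 g2.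
Proof.
rewrite !hdistE // hagree_prod_fun.
have := hagree_bounds f1 g1 X1_gt0; have := hagree_bounds f2 g2 X2_gt0; nra.
Qed.

Lemma hdist_prod_fun_ge_l : hdist f1 g1 <= hdist (prod_fun f1 f2) (prod_fun g1 g2).
Proof.
rewrite !hdistE // hagree_prod_fun.
have := hagree_bounds f1 g1 X1_gt0; have := hagree_bounds f2 g2 X2_gt0; nra.
Qed.

Lemma hdist_prod_fun_ge_r : hdist f2 g2 <= hdist (prod_fun f1 f2) (prod_fun g1 g2).
Proof.
rewrite !hdistE // hagree_prod_fun.
have := hagree_bounds f1 g1 X1_gt0; have := hagree_bounds f2 g2 X2_gt0; nra.
Qed.

End ProdFunDist.

Lemma hdist_ext (X : finType) (f g f' g' : X -> X) :
  f =1 f' -> g =1 g' -> hdist f g = hdist f' g'.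
Proof.
move=> eq_f eq_g; rewrite /hdist; congr (Rdiv (INR _) _).
by apply: eq_card => x; rewrite !inE eq_f eq_g.
Qed.

Lemma hdist_eq0 (X : finType) (f g : X -> X) : f =1 g -> hdist f g = 0.
Proof.
move=> eq_fg; rewrite /hdist.
have -> : #|[pred x | f x != g x]| = 0%N.
  by apply: eq_card0 => x; rewrite !inE eq_fg eqxx.
by rewrite /Rdiv Rmult_0_l.
Qed.

Definition approx_morphism (M : monoid) (X : finType) (phi : M -> X -> X)
    (K : list M) (d : R) : Prop :=
  (forall k1 k2, In k1 K -> In k2 K ->
     hdist (phi (mmul k1 k2)) (phi k1 \o phi k2) <= d) /\
  hdist (phi (mone M)) (fun x => x) <= d.

Section ApproxMorphism.
Variables (M : monoid) (X : finType).

Lemma approx_morphism_le (phi : M -> X -> X) K d d' :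
  d <= d' -> approx_morphism phi K d -> approx_morphism phi K d'.
Proof.
move=> le_dd' [mul_phi one_phi]; split; last exact: Rle_trans le_dd'.
by move=> k1 k2 K_k1 K_k2; apply: Rle_trans le_dd'; apply: mul_phi.
Qed.

Lemma approx_morphism_incl (phi : M -> X -> X) K K' d :
  incl K K' -> approx_morphism phi K' d -> approx_morphism phi K d.
Proof.
by move=> sKK' [mul_phi one_phi]; split=> // k1 k2 K_k1 K_k2; apply: mul_phi; apply: sKK'.
Qed.

Lemma approx_morphism_const_id K : approx_morphism (fun (_ : M) (x : X) => x) K 0.
Proof. by split=> [k1 k2 _ _|]; rewrite hdist_eq0 //; apply: Rle_refl. Qed.

Lemma approx_morphism_comp (N : monoid) (psi : M -> N) (phi : N -> X -> X) K d :
  (forall k1 k2, In k1 K -> In k2 K -> psi (mmul k1 k2) = mmul (psi k1) (psi k2)) ->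
  psi (mone M) = mone N ->
  approx_morphism phi (map psi K) d -> approx_morphism (fun m => phi (psi m)) K d.
Proof.
move=> psiM psi1 [mul_phi one_phi]; split; last by rewrite psi1.
by move=> k1 k2 K_k1 K_k2; rewrite psiM //; apply: mul_phi; apply: in_map.
Qed.

Lemma approx_morphism_prod (Y : finType) (phi : M -> X -> X) (chi : M -> Y -> Y) K d e :
  (0 < #|X|)%N -> (0 < #|Y|)%N ->
  approx_morphism phi K d -> approx_morphism chi K e ->
  approx_morphism (fun m => prod_fun (phi m) (chi m)) K (d + e).
Proof.
move=> X_gt0 Y_gt0 [mul_phi one_phi] [mul_chi one_chi]; split.
- move=> k1 k2 K_k1 K_k2.
  apply: Rle_trans (hdist_prod_fun_le (phi (mmul k1 k2)) (phi k1 \o phi k2)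
                      (chi (mmul k1 k2)) (chi k1 \o chi k2) X_gt0 Y_gt0) _.
  exact: Rplus_le_compat (mul_phi _ _ K_k1 K_k2) (mul_chi _ _ K_k1 K_k2).
- rewrite (hdist_ext (g' := prod_fun (fun x : X => x) (fun y : Y => y)) (frefl _));
    last by case.
  apply: Rle_trans (hdist_prod_fun_le _ _ _ _ X_gt0 Y_gt0) _.
  exact: Rplus_le_compat.
Qed.

End ApproxMorphism.

Definition sofic_approx (M : monoid) (K : list M) (eps : R) (X : finType)
    (phi : M -> X -> X) : Prop :=
  [/\ (0 < #|X|)%N, approx_morphism phi K eps &
      forall k1 k2, In k1 K -> In k2 K -> k1 <> k2 -> 1 - eps <= hdist (phi k1) (phi k2)].

Lemma soficP (M : monoid) :
  sofic M <-> forall K eps, 0 < eps -> exists X phi, @sofic_approx M K eps X phi.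
Proof.
split=> sofM K eps eps_gt0; have [X [phi]] := sofM K eps eps_gt0.
  by case=> [X_gt0 [mul_phi [one_phi sep_phi]]]; exists X, phi.
by case=> [X_gt0 [mul_phi one_phi] sep_phi]; exists X, phi.
Qed.

Section ResiduallySofic.
Variables (M : monoid) (M_res : residually_sofic M).

Lemma residually_sofic_approx (K : list M) (e : R) (L : list (M * M)) : 0 < e ->
  exists (X : finType) (phi : M -> X -> X),
    [/\ (0 < #|X|)%N, approx_morphism phi K (INR (length L) * e) &
        forall a b, In (a, b) L -> a <> b -> 1 - e <= hdist (phi a) (phi b)].
Proof.
move=> e_gt0; elim: L => [|[a b] L [X [phi [X_gt0 am_phi sep_phi]]]].
  exists unit, (fun _ x => x); split=> //; first by rewrite card_unit.
  by rewrite Rmult_0_l; apply: approx_morphism_const_id.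
have defect_cons : INR (length ((a, b) :: L)) * e = INR (length L) * e + e.
  by rewrite [length _]/= S_INR; ring.
have [<-|neq_ab] := classic (a = b).
  exists X, phi; split=> //.
    by apply: approx_morphism_le am_phi; rewrite defect_cons; lra.
  by move=> a' b' [[<- <-] //|L_ab'] neq_ab'; apply: sep_phi.
have [N [psi [sofN [[psiM psi1] psi_ab]]]] := M_res neq_ab.
have [Y [chi [Y_gt0 am_chi sep_chi]]] := (proj1 (soficP N)) sofN (map psi (a :: b :: K)) e e_gt0.
exists (prod X Y), (fun m => prod_fun (phi m) (chi (psi m))); split.
- by rewrite card_prod muln_gt0 X_gt0.
- rewrite defect_cons; apply: approx_morphism_prod X_gt0 Y_gt0 am_phi _.
  apply: approx_morphism_incl (incl_tl a (incl_tl b (incl_refl K))) _.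
  exact: approx_morphism_comp (fun k1 k2 _ _ => psiM k1 k2) psi1 am_chi.
- move=> a' b' [[<- <-] _|L_ab' neq_ab'].
    apply: Rle_trans (hdist_prod_fun_ge_r _ _ _ _ X_gt0 Y_gt0).
    by apply: sep_chi psi_ab; [left | right; left].
  apply: Rle_trans (hdist_prod_fun_ge_l _ _ _ _ X_gt0 Y_gt0).
  exact: sep_phi.
Qed.

Lemma residually_sofic_sofic : sofic M.
Proof.
apply/soficP => K eps eps_gt0.
set L := list_prod K K; set e := eps / (INR (length L) + 1).
have n_ge0 : 0 <= INR (length L) by apply: pos_INR.
have e_gt0 : 0 < e by apply: Rdiv_lt_0_compat; lra.
have eps_split : INR (length L) * e + e = eps by rewrite /e; field; lra.
have defect_ge0 : 0 <= INR (length L) * e by apply: Rmult_le_pos; lra.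
have [X [phi [X_gt0 am_phi sep_phi]]] := residually_sofic_approx K L e_gt0.
exists X, phi; split=> //; first by apply: approx_morphism_le am_phi; lra.
move=> k1 k2 K_k1 K_k2 neq_k; apply: Rle_trans (sep_phi _ _ _ neq_k); first lra.
exact: in_prod.
Qed.

End ResiduallySofic.

Lemma sofic_approx_pullback (M N : monoid) (psi : M -> N) (K : list M) (eps : R) :
  sofic N -> 0 < eps ->
  (forall k1 k2, In k1 K -> In k2 K -> psi (mmul k1 k2) = mmul (psi k1) (psi k2)) ->
  psi (mone M) = mone N ->
  (forall k1 k2, In k1 K -> In k2 K -> psi k1 = psi k2 -> k1 = k2) ->
  exists X phi, @sofic_approx M K eps X phi.
Proof.
move=> sofN eps_gt0 psiM psi1 psi_inj.
have [X [chi [X_gt0 am_chi sep_chi]]] := (proj1 (soficP N)) sofN (map psi K) eps eps_gt0.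
exists X, (fun m => chi (psi m)); split=> //; first exact: approx_morphism_comp am_chi.
move=> k1 k2 K_k1 K_k2 neq_k; apply: sep_chi; try exact: in_map.
by move/(psi_inj _ _ K_k1 K_k2).
Qed.

(* Junk value [sub_one] off the submonoid. *)
Definition submonoid_proj (M : monoid) (S : list M) (m : M) : gen_submonoid S :=
  match excluded_middle_informative (gen S m) with
  | left S_m => exist _ m S_m
  | right _ => sub_one S
  end.

Lemma submonoid_projK (M : monoid) (S : list M) (m : M) :
  gen S m -> proj1_sig (submonoid_proj S m) = m.
Proof. by rewrite /submonoid_proj; case: excluded_middle_informative. Qed.

Lemma locally_residually_sofic_sofic (M : monoid) :
  locally_residually_sofic M -> sofic M.
Proof.
move=> M_lres; apply/soficP => K eps eps_gt0.
apply: (@sofic_approx_pullback _ _ (submonoid_proj K)) eps_gt0 _ _ _.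
- exact: residually_sofic_sofic (M_lres K).
- move=> k1 k2 K_k1 K_k2; have [gk1 gk2] := (gen_elt K_k1, gen_elt K_k2).
  by apply: sub_eq; rewrite /= !submonoid_projK //; apply: gen_mul.
- by apply: sub_eq; rewrite /= submonoid_projK //; apply: gen_one.
- move=> k1 k2 K_k1 K_k2 eq_proj.
  by rewrite -(submonoid_projK (gen_elt K_k1)) eq_proj submonoid_projK //; apply: gen_elt.
Qed.

Theorem corollary3p14 :
  (forall M : monoid, locally_residually_sofic M -> sofic M) /\
  (forall M : monoid, residually_sofic M -> sofic M).
Proof.
split; [exact: locally_residually_sofic_sofic | exact: residually_sofic_sofic].
Qed.
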